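(* Let $p$ be a prime and $h(x)\in\mathbb Z[x]$ with $d:=\deg_p h\ge1$. For every integer $m\ge1$, $$\#\{a\bmod p^m:\ h(a)\equiv0\pmod{p^m}\}\le d\cdot p^{m-\lceil m/d\rceil}.$$
   Context: $\deg_p h$ denotes the degree of the reduction of $h$ modulo $p$. *)

From mathcomp Require Import all_boot all_algebra.
Set Implicit Arguments. Unset Strict Implicit. Unset Printing Implicit Defensive.
Import GRing.Theory Num.Theory.
Local Open Scope ring_scope.

(* deg_p h : degree of the reduction of h modulo p (as a polynomial over 'F_p).
   For the zero reduction this is (size 0).-1 = 0. *)
Definition deg_p (p : nat) (h : {poly int}) : nat :=
  (size (map_poly (fun z : int => z%:~R : 'F_p) h)).-1.

Definition nroots_mod (p m : nat) (h : {poly int}) : nat :=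
  #|[set a : 'I_(p ^ m) | ((p ^ m)%:Z %| h.[(a : nat)%:Z])%Z]|.

Definition ceil_div (m d : nat) : nat := ((m + d.-1) %/ d)%N.

From mathcomp Require Import all_boot all_algebra zify.
Set Implicit Arguments. Unset Strict Implicit. Unset Printing Implicit Defensive.
Import GRing.Theory Num.Theory.
Local Open Scope ring_scope.

(* Put k = ceil(m/d). Given roots of h mod p^N that are pairwise incongruent
   mod p^k, write h = (X - a) q + h(a) for one of them: q is again of degree
   one less mod p, and q vanishes mod p^(N - (k-1)) at the others. After d
   steps a nonzero constant mod p is left, so d + 1 such roots force
   N <= d (k - 1), which is less than m by the choice of k. Hence the roots mod p^m lie in at most d classes mod p^k,
   each of which contains p^(m-k) residues mod p^m. *)

Lemma ceil_div_leq (m d : nat) : (ceil_div m d <= m)%N.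
Proof.
rewrite /ceil_div; have [->|d_gt0] := posnP d; first by rewrite divn0.
have := divn_eq (m + d.-1) d; have := ltn_pmod (m + d.-1) d_gt0; nia.
Qed.

Lemma mul_pred_ceil_div_lt (m d : nat) : (0 < m)%N -> (d * (ceil_div m d).-1 < m)%N.
Proof.
rewrite /ceil_div; have [->|d_gt0] := posnP d; first by rewrite mul0n.
have := divn_eq (m + d.-1) d; have := ltn_pmod (m + d.-1) d_gt0; nia.
Qed.

Lemma card_le_imset_mul (T U V : finType) (f : T -> U) (g : T -> V) (S : {set T}) :
  {in S &, injective (fun x => (f x, g x))} -> (#|S| <= #|f @: S| * #|V|)%N.
Proof.
move=> fg_inj; rewrite -(card_in_imset fg_inj) -cardsT -cardsX.
apply/subset_leq_card/subsetP => _ /imsetP[x xS ->].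
by rewrite in_setX imset_f ?in_setT.
Qed.

Lemma lift_seq_imset (T U : finType) (f : T -> U) (D : {pred T}) (r : seq U) :
  {subset r <= f @: D} -> exists2 s : seq T, {subset s <= D} & map f s = r.
Proof.
elim: r => [|u r IHr] rD; first by exists [::].
have /imsetP[x xD ->] := rD u (mem_head u r).
have [s sD <-] : exists2 s, {subset s <= D} & map f s = r.
  by apply: IHr => v vr; apply: rD; rewrite inE vr orbT.
by exists (x :: s) => // y; rewrite inE => /predU1P[->|/sD].
Qed.

Lemma card_imset_le (T U : finType) (f : T -> U) (S : {set T}) (d : nat) :
  (forall s : seq T, {subset s <= S} -> uniq (map f s) -> (size s <= d)%N) ->
  (#|f @: S| <= d)%N.
Proof.
move=> size_le; have [s sS fs] : exists2 s, {subset s <= S} & map f s = enum (f @: S).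
  by apply: lift_seq_imset => c; rewrite mem_enum.
by rewrite cardE -fs size_map size_le ?fs ?enum_uniq.
Qed.

Lemma pfactor_dvdz_cancelr (p N k : nat) (x y : int) : prime p ->
  ((p ^ N)%:Z %| y * x)%Z -> ~~ ((p ^ k)%:Z %| x)%Z -> ((p ^ (N - k.-1))%:Z %| y)%Z.
Proof.
rewrite !dvdzE /= abszM => p_pr; set a := `|y|%N; set b := `|x|%N => yx_dvd.
have [->|a_gt0] := posnP a; first by rewrite dvdn0.
have [->|b_gt0] := posnP b; first by rewrite dvdn0.
rewrite !pfactor_dvdn ?muln_gt0 ?a_gt0 // lognM // -ltnNge in yx_dvd *.
lia.
Qed.

Section ReductionModp.

Variable p : nat.
Hypothesis p_pr : prime p.

Local Notation red := (map_poly (fun z : int => z%:~R : 'F_p)).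

Lemma Fp_intr_eq0 (z : int) : ((z%:~R : 'F_p) == 0) = ((p%:Z) %| z)%Z.
Proof.
have dvdn_Fp n : ((n%:R : 'F_p) == 0) = (p %| n)%N by rewrite -(dvdn_pcharf (pchar_Fp p_pr)).
by case: z => n; rewrite ?NegzE ?mulrNz ?oppr_eq0 dvdzE ?abszN dvdn_Fp.
Qed.

Lemma size_red_root_factor (h q : {poly int}) (a : int) :
  h - (h.[a])%:P = q * ('X - a%:P) -> (1 < size (red h))%N ->
  size (red h) = (size (red q)).+1.
Proof.
move=> /(congr1 red); rewrite rmorphM rmorphB /= map_polyC map_polyXsubC /= => hq h_gt1.
have : size (red h - (h.[a])%:~R%:P) = size (red h).
  by rewrite size_polyDl // size_polyN (leq_ltn_trans (size_polyC_leq1 _)).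
rewrite hq; have [->|q_neq0] := eqVneq (red q) 0.
  by rewrite mul0r size_poly0 => size0; rewrite -size0 in h_gt1.
by rewrite size_Mmonic ?monicXsubC // size_XsubC addn2 => <-.
Qed.

Lemma red_const_root_pexp_eq0 (h : {poly int}) (x : int) (N : nat) :
  size (red h) = 1%N -> ((p ^ N)%:Z %| h.[x])%Z -> N = 0%N.
Proof.
move=> size1 hx_dvd; have hc := size1_polyC (eq_leq size1).
have c_neq0 : (red h)`_0 != 0.
  by have := lead_coef_eq0 (red h); rewrite lead_coefE size1 -size_poly_eq0 size1 => ->.
have := horner_map (intmul (1 : 'F_p)) h x; rewrite hc hornerC => hx.
rewrite hx Fp_intr_eq0 in c_neq0.
case: N hx_dvd => // N hx_dvd; apply: contraNeq c_neq0 => _.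
by apply: dvdz_trans hx_dvd; rewrite dvdzE /= expnS dvdn_mulr.
Qed.

Lemma incongruent_roots_pexp_leq (k N : nat) (h : {poly int}) (s : seq int) :
  red h != 0 -> (deg_p p h < size s)%N ->
  pairwise (fun x y => ~~ ((p ^ k)%:Z %| x - y)%Z) s ->
  {in s, forall x, ((p ^ N)%:Z %| h.[x])%Z} ->
  (N <= deg_p p h * k.-1)%N.
Proof.
rewrite /deg_p -size_poly_gt0 => /prednK; move: (size _).-1 => d /esym.
elim: d h N s => [|d IHd] h N s size_h.
  case: s => // x s _ _ roots.
  by rewrite (red_const_root_pexp_eq0 size_h (roots x (mem_head x s))).
case: s => //= a s; rewrite ltnS => d_lt /andP[a_incong s_incong] roots.
have [q hq] : exists q, h - (h.[a])%:P = q * ('X - a%:P).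
  by apply/factor_theorem; rewrite /root !hornerE subrr.
have size_q : size (red q) = d.+1.
  by apply: succn_inj; rewrite -size_h (size_red_root_factor hq) ?size_h.
suff : (N - k.-1 <= d * k.-1)%N by rewrite mulSn; lia.
apply: (IHd q _ s size_q d_lt s_incong) => x xs.
apply: (@pfactor_dvdz_cancelr p N k (x - a)) => //; last first.
  by move: (allP a_incong x xs); apply: contra; rewrite -opprB rpredN.
have := congr1 (horner^~ x) hq; rewrite hornerD hornerN hornerC hornerM hornerXsubC => <-.
by rewrite rpredB ?roots // inE ?eqxx ?xs ?orbT.
Qed.

End ReductionModp.

Theorem proposition2p2 (p : nat) (h : {poly int}) (m : nat) :
  prime p -> (1 <= deg_p p h)%N -> (1 <= m)%N ->
  (nroots_mod p m h <= deg_p p h * p ^ (m - ceil_div m (deg_p p h)))%N.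
Proof.
move=> p_pr deg_gt0 m_gt0; set d := deg_p p h in deg_gt0 *; set k := ceil_div m d.
have pk_gt0 : (0 < p ^ k)%N by rewrite expn_gt0 prime_gt0.
have div_lt (a : 'I_(p ^ m)) : (a %/ p ^ k < p ^ (m - k))%N.
  by rewrite ltn_divLR // -expnD subnK ?ceil_div_leq.
pose f (a : 'I_(p ^ m)) : 'I_(p ^ k) := Ordinal (ltn_pmod a pk_gt0).
pose g (a : 'I_(p ^ m)) : 'I_(p ^ (m - k)) := Ordinal (div_lt a).
rewrite /nroots_mod; set S := [set _ | _].
have fg_inj : {in S &, injective (fun a => (f a, g a))}.
  move=> a b _ _ [fab gab]; apply: val_inj.
  by rewrite /= (divn_eq a (p ^ k)) (divn_eq b (p ^ k)) fab gab.
suff classes_le : (#|f @: S| <= d)%N.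
  by rewrite (leq_trans (card_le_imset_mul fg_inj)) // card_ord leq_mul2r classes_le orbT.
apply: card_imset_le => s sS uniq_fs; rewrite leqNgt; apply/negP => d_lt.
suff : (m <= d * k.-1)%N by rewrite leqNgt mul_pred_ceil_div_lt.
apply: (incongruent_roots_pexp_leq p_pr (k := k) (s := [seq (nat_of_ord a)%:Z | a <- s])).
- by rewrite -size_poly_eq0 -lt0n; move: deg_gt0; rewrite /d /deg_p; case: (size _).
- by rewrite size_map.
- move: uniq_fs; rewrite pairwise_map uniq_pairwise pairwise_map.
  apply: sub_pairwise => a b /=; apply: contra.
  by rewrite -eqz_mod_dvd !modz_nat => /eqP[fab]; apply/eqP/val_inj.
- by move=> _ /mapP[a /sS aS ->]; rewrite inE in aS.
Qed.
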